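(* Let $q=2^m\geq 4$ with $m$ a positive integer, let $b\in\mathbb{F}_q^*$ and $\delta\in\mathbb{F}_{q^2}\setminus\mathbb{F}_q$. Put $$B=b^4(\delta^q+\delta)^4\delta^{q+1},\quad C=b^4(\delta^q+\delta)^4,\quad D=b^4(\delta^q+\delta)^5,$$ and define $S_{-1}=0$, $S_0=1$, $S_i=C^{2^{i-1}}S_{i-1}+D^{2^{i-1}}S_{i-2}$ for $i\geq1$. If the polynomial $$P(x)=b(x^q+x+\delta)^{1+(q^2+q)/4}+x$$ permutes $\mathbb{F}_{q^2}$, then its compositional inverse over $\mathbb{F}_{q^2}$ is $$P^{-1}(x)=x+b\left(\delta+\sum_{i=0}^{m-1}\left(S_{m-2-i}^{2^{i+1}}+D^{1-2^{i+1}}S_i\right)\left((x^q+x)^4+B\right)^{2^i}\right)^{1+(q^2+q)/4}.$$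
   Context: The compositional inverse of a permutation polynomial $f$ of $\mathbb{F}_{Q}$ is the unique polynomial $f^{-1}$ (modulo $x^Q-x$) with $f(f^{-1}(c))=f^{-1}(f(c))=c$ for all $c\in\mathbb{F}_Q$. *)

From HB Require Import structures.
From mathcomp Require Import all_boot all_order all_algebra all_field.
Set Implicit Arguments. Unset Strict Implicit. Unset Printing Implicit Defensive.
Import GRing.Theory.
Local Open Scope ring_scope.

(* Spair C D n = (S_{n-1}, S_n) where S_{-1} = 0, S_0 = 1 and
   S_i = C^(2^(i-1)) S_{i-1} + D^(2^(i-1)) S_{i-2} for i >= 1. *)
Fixpoint Spair (F : fieldType) (C D : F) (n : nat) : F * F :=
  match n with
  | O => (0, 1)
  | k.+1 => let: (a, c) := Spair C D k in
            (c, C ^+ (2 ^ k) * c + D ^+ (2 ^ k) * a)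
  end.

Definition Sprev (F : fieldType) (C D : F) (n : nat) : F := (Spair C D n).1.
Definition Sseq (F : fieldType) (C D : F) (n : nat) : F := (Spair C D n).2.

From HB Require Import structures.
From mathcomp Require Import all_boot all_order all_algebra all_field.
From mathcomp Require Import ring zify.
Set Implicit Arguments. Unset Strict Implicit. Unset Printing Implicit Defensive.
Import GRing.Theory.
Local Open Scope ring_scope.

(* Write Tr x = x^q + x, which lies in F_q, and M w = w^4 + C w^2 + D w, an
   F_2-linear map of F_q.  The ((q^2 + q)/4)-th power of w + delta is a power of
   its norm, which gives Tr (P x)^4 + B = M (Tr x); hence P^-1 is explicit once
   M is inverted on F_q.  With the coefficients c_i of the statement, the
   recurrence for S makes sum_i c_i (M w)^(2^i) telescope to lambda w, where
   lambda is the trace of the monodromy matrix of the recurrence over one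
   period m, and lambda^2 = lambda.  That matrix has determinant 1, so if
   lambda = 0 it fixes a nonzero vector, and the corresponding periodic
   solution yields a nonzero root of M in F_q; lifting it through P
   contradicts injectivity.  Hence lambda = 1. *)

Definition frobfix (R : comNzRingType) (m : nat) : {pred R} :=
  fun x => x ^+ (2 ^ m) == x.

Fact frobfix_mulr_closed (R : comNzRingType) m : mulr_closed (@frobfix R m).
Proof.
split; first by rewrite unfold_in /= expr1n.
by move=> x y; rewrite !unfold_in /= exprMn => /eqP-> /eqP->.
Qed.

HB.instance Definition _ (R : comNzRingType) (m : nat) :=
  GRing.isMulClosed.Build R (@frobfix R m) (@frobfix_mulr_closed R m).

Lemma frobfixP (R : comNzRingType) m (x : R) :
  reflect (x ^+ (2 ^ m) = x) (x \in frobfix m).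
Proof. exact: eqP. Qed.

Lemma expr2nD (R : pzSemiRingType) k j (x : R) :
  (x ^+ (2 ^ k)) ^+ (2 ^ j) = x ^+ (2 ^ (k + j)).
Proof. by rewrite -exprM -expnD. Qed.

Lemma expr2S (R : pzSemiRingType) n (x : R) : x ^+ (2 ^ n.+1) = (x ^+ (2 ^ n)) ^+ 2.
Proof. by rewrite expnS mulnC exprM. Qed.

Lemma frobfix_period (R : pzSemiRingType) m n (x : R) :
  x ^+ (2 ^ m) = x -> x ^+ (2 ^ (n + m)) = x ^+ (2 ^ n).
Proof. by move=> hx; rewrite expnD mulnC exprM hx. Qed.

Lemma exprVpred (F : fieldType) n (x : F) :
  x != 0 -> (0 < n)%N -> x ^- (n - 1) = x / x ^+ n.
Proof. by move=> x0 n0; rewrite exprB ?unitfE // expr1 invf_div. Qed.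

Lemma rec2_ext (R : pzRingType) (c d f g : nat -> R) :
  (forall n, f n.+2 = c n * f n.+1 + d n * f n) ->
  (forall n, g n.+2 = c n * g n.+1 + d n * g n) ->
  f 0%N = g 0%N -> f 1%N = g 1%N -> f =1 g.
Proof.
move=> hf hg h0 h1 n; elim: n {-2}n (leqnn n) => [|k IH] [|[|n]] // hn.
by rewrite hf hg !IH // ltnW.
Qed.

(* Summation by parts: the interior coefficients of W cancel by hypothesis. *)
Lemma sum_rec3 (R : comPzRingType) (a d c W : nat -> R) (n : nat) :
  (forall j, (j < n)%N -> c j + c j.+1 * a j.+1 + c j.+2 * d j.+2 = 0) ->
  \sum_(i < n.+2) c i * (W i.+2 + a i * W i.+1 + d i * W i) =
    c 0%N * d 0%N * W 0%N + (c 0%N * a 0%N + c 1%N * d 1%N) * W 1%N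
    + c n * W n.+2 + c n.+1 * (W n.+3 + a n.+1 * W n.+2).
Proof.
elim: n => [|n IH] hc; first by rewrite !big_ord_recr big_ord0 /=; ring.
rewrite big_ord_recr /= IH => [|j hj]; last by apply: hc; apply: ltnW.
have := hc n (ltnSn n); set z := c n + _ => hz.
by rewrite -[RHS]addr0 -(mul0r (W n.+2)) -hz /z; ring.
Qed.

Section Pchar2.
Variable R : comNzRingType.
Hypothesis R2 : 2%N \in [pchar R].

Lemma frobD k (x y : R) : (x + y) ^+ (2 ^ k) = x ^+ (2 ^ k) + y ^+ (2 ^ k).
Proof. by apply: exprDn_pchar; rewrite pnatX (pnatE _ (isT : prime 2)) R2. Qed.

Lemma sqrrD_pchar2 (x y : R) : (x + y) ^+ 2 = x ^+ 2 + y ^+ 2.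
Proof. exact: (frobD 1). Qed.

Lemma exp4D_pchar2 (x y : R) : (x + y) ^+ 4 = x ^+ 4 + y ^+ 4.
Proof. exact: (frobD 2). Qed.

Lemma frob_sum k I (r : seq I) (P : pred I) (G : I -> R) :
  (\sum_(i <- r | P i) G i) ^+ (2 ^ k) = \sum_(i <- r | P i) G i ^+ (2 ^ k).
Proof.
apply: (big_morph (fun x => x ^+ (2 ^ k))); first exact: frobD.
by rewrite expr0n expn_eq0.
Qed.

Lemma eq_pchar2 (x y z : R) : x = y + (z + z) -> x = y.
Proof. by rewrite addrr_pchar2 // addr0. Qed.

Lemma frobfix0 m : (0 : R) \in frobfix m.
Proof. by apply/frobfixP; rewrite expr0n expn_eq0. Qed.

Lemma frobfixD m (x y : R) :
  x \in frobfix m -> y \in frobfix m -> x + y \in frobfix m.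
Proof. by move=> /frobfixP hx /frobfixP hy; apply/frobfixP; rewrite frobD hx hy. Qed.

Lemma singular2_kernel m (a b c d : R) :
  a \in frobfix m -> b \in frobfix m -> c \in frobfix m -> d \in frobfix m ->
  a * d = b * c ->
  exists x y, [/\ x \in frobfix m, y \in frobfix m, (x, y) != (0, 0),
                  a * x + b * y = 0 & c * x + d * y = 0].
Proof.
move=> fa fb fc fd det.
have dbl (u : R) : u + u = 0 by rewrite addrr_pchar2.
have [[-> ->]|ab] := eqVneq (a, b) (0, 0); last first.
  exists b, a; split=> //; first by rewrite xpair_eqE andbC.
    by rewrite mulrC dbl.
  by rewrite mulrC -det mulrC dbl.
have [[-> ->]|cd] := eqVneq (c, d) (0, 0); last first.
  by exists d, c; split=> //; rewrite ?xpair_eqE 1?andbC // ?mul0r ?addr0 // mulrC dbl.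
exists 1, 0; split; rewrite ?mul0r ?addr0 //.
- exact: rpred1.
- exact: frobfix0.
- by rewrite xpair_eqE oner_eq0.
Qed.

End Pchar2.

Section Recurrence.
Variable F : fieldType.
Hypothesis F2 : 2%N \in [pchar F].
Variables C D : F.
Local Notation s := (Sprev C D).

Lemma Sprev0 : s 0 = 0. Proof. by []. Qed.
Lemma Sprev1 : s 1 = 1. Proof. by []. Qed.

Lemma SseqE n : Sseq C D n = s n.+1.
Proof. by rewrite /Sprev /Sseq /=; case: (Spair C D n). Qed.

Lemma SprevSS n : s n.+2 = C ^+ (2 ^ n) * s n.+1 + D ^+ (2 ^ n) * s n.
Proof. by rewrite /Sprev /=; case: (Spair C D n). Qed.

Lemma frob_SprevSS k n : s n.+2 ^+ (2 ^ k) =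
  C ^+ (2 ^ (n + k)) * s n.+1 ^+ (2 ^ k) + D ^+ (2 ^ (n + k)) * s n ^+ (2 ^ k).
Proof. by rewrite SprevSS frobD // !exprMn !expr2nD. Qed.

(* Both sides solve the recurrence shifted by two steps: the right-hand side
   because squaring and raising to the fourth power shift it by one and two. *)
Lemma SprevSS_frob n : s n.+2 = C * s n.+1 ^+ 2 + D ^+ 2 * s n ^+ 4.
Proof.
pose c n := C ^+ (2 ^ n.+2); pose d n := D ^+ (2 ^ n.+2).
apply: (@rec2_ext F c d (fun n => s n.+2) (fun n => C * s n.+1 ^+ 2 + D ^+ 2 * s n ^+ 4))
  => {n} [n|n||].
- by rewrite SprevSS.
- rewrite (frob_SprevSS 1) (frob_SprevSS 2) !addn1 !addn2 expn1 -[(2 ^ 2)%N]/4%N.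
  by rewrite /c /d; ring.
- by rewrite SprevSS expn0 !expr1 Sprev0 Sprev1; ring.
- by rewrite !SprevSS expn0 expn1 !expr1 Sprev0 Sprev1; ring.
Qed.

Lemma frob_SprevSS_frob k n : s n.+2 ^+ (2 ^ k) =
  C ^+ (2 ^ k) * s n.+1 ^+ (2 ^ k.+1) + D ^+ (2 ^ k.+1) * s n ^+ (2 ^ k.+2).
Proof.
rewrite SprevSS_frob frobD // [(C * _) ^+ _]exprMn [(D ^+ 2 * _) ^+ _]exprMn.
by rewrite ![(_ ^+ 2) ^+ (2 ^ k)]exprAC ![(_ ^+ 4) ^+ (2 ^ k)]exprAC !expr2S; ring.
Qed.

(* With s = Sprev, a fundamental system of solutions of
   X n.+2 = C^(2^n) X n.+1 + D^(2^n) X n, with initial values (1, 0). *)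
Definition Tsol n := if n is k.+1 then D * s k ^+ 2 else 1.
Definition Xsol (a0 a1 : F) n := a0 * Tsol n + a1 * s n.

Lemma TsolSS n : Tsol n.+2 = C ^+ (2 ^ n) * Tsol n.+1 + D ^+ (2 ^ n) * Tsol n.
Proof.
case: n => [|n] /=; first by rewrite expn0 !expr1 Sprev0 Sprev1; ring.
by rewrite (frob_SprevSS 1) !addn1; ring.
Qed.

Lemma XsolSS a0 a1 n :
  Xsol a0 a1 n.+2 = C ^+ (2 ^ n) * Xsol a0 a1 n.+1 + D ^+ (2 ^ n) * Xsol a0 a1 n.
Proof. by rewrite /Xsol TsolSS SprevSS; ring. Qed.

Lemma Xsol0 a0 a1 : Xsol a0 a1 0 = a0.
Proof. by rewrite /Xsol /= Sprev0; ring. Qed.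

Lemma Xsol1 a0 a1 : Xsol a0 a1 1 = a1.
Proof. by rewrite /Xsol /= Sprev0 Sprev1; ring. Qed.

Lemma XsolZ c a0 a1 n : Xsol (c * a0) (c * a1) n = c * Xsol a0 a1 n.
Proof. by rewrite /Xsol; ring. Qed.

Lemma casoratian n : (Tsol n * s n.+1 + s n * Tsol n.+1) * D = D ^+ (2 ^ n).
Proof.
elim: n => [|n IH]; first by rewrite /= expn0 expr1 Sprev0 Sprev1; ring.
have -> : Tsol n.+1 * s n.+2 + s n.+1 * Tsol n.+2
          = D ^+ (2 ^ n) * (Tsol n * s n.+1 + s n * Tsol n.+1).
  rewrite SprevSS TsolSS.
  by apply: (eq_pchar2 F2 (z := C ^+ (2 ^ n) * s n.+1 * Tsol n.+1)); ring.
by rewrite -mulrA IH -exprD addnn -mul2n -expnS.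
Qed.

Definition Mlin (w : F) := w ^+ 4 + C * w ^+ 2 + D * w.

Lemma frob_Mlin i w : Mlin w ^+ (2 ^ i) =
  w ^+ (2 ^ i.+2) + C ^+ (2 ^ i) * w ^+ (2 ^ i.+1) + D ^+ (2 ^ i) * w ^+ (2 ^ i).
Proof.
rewrite /Mlin !frobD // [(C * _) ^+ _]exprMn [(D * _) ^+ _]exprMn -!exprM.
by rewrite !expnS mulnA.
Qed.

Definition inv_coef (m i : nat) :=
  s (m - 1 - i) ^+ (2 ^ i.+1) + D ^- (2 ^ i.+1 - 1) * Sseq C D i.

(* The trace of the monodromy matrix [[Tsol m, s m]; [Tsol m.+1, s m.+1]]. *)
Definition lambda (m : nat) := Tsol m + s m.+1.

Section Monodromy.
Variable k : nat.
Local Notation m := k.+2.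
Hypotheses (hD : D != 0) (hCq : C ^+ (2 ^ m) = C) (hDq : D ^+ (2 ^ m) = D).

Lemma inv_coefE i : inv_coef m i = s (m - 1 - i) ^+ (2 ^ i.+1) + D / D ^+ (2 ^ i.+1) * s i.+1.
Proof. by rewrite /inv_coef SseqE exprVpred ?expn_gt0. Qed.

Lemma inv_coef_rec j : (j.+2 < m)%N ->
  inv_coef m j + inv_coef m j.+1 * C ^+ (2 ^ j.+1) + inv_coef m j.+2 * D ^+ (2 ^ j.+2) = 0.
Proof.
move=> hj; rewrite !inv_coefE.
set n := (k - j.+1)%N.
have -> : (m - 1 - j = n.+2)%N by lia.
have -> : (m - 1 - j.+1 = n.+1)%N by lia.
have -> : (m - 1 - j.+2 = n)%N by lia.
rewrite (frob_SprevSS_frob j.+1) (SprevSS j.+1).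
set u := D ^+ (2 ^ j.+1); set C' := C ^+ (2 ^ j.+1).
have u0 : u != 0 by rewrite expf_neq0.
rewrite [D ^+ (2 ^ j.+3)]expr2S [D ^+ (2 ^ j.+2)]expr2S -/u.
set a := s n.+1 ^+ _; set a' := s n ^+ _.
apply: (eq_pchar2 F2 (z := C' * a + u ^+ 2 * a' + D / u * s j.+1 + C' * (D / u ^+ 2) * s j.+2)).
by field.
Qed.

Lemma inv_coef_wrap : inv_coef m 0 * C + inv_coef m 1 * D ^+ 2 + inv_coef m k.+1 = 0.
Proof.
rewrite !inv_coefE.
have -> : (m - 1 - 0 = k.+1)%N by lia.
have -> : (m - 1 - 1 = k)%N by lia.
have -> : (m - 1 - k.+1 = 0)%N by lia.
rewrite hDq SprevSS (SprevSS_frob k) expr0n expn_eq0 /= expn0 !expr1 Sprev0 Sprev1.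
apply: (eq_pchar2 F2 (z := C * s k.+1 ^+ 2 + D ^+ 2 * s k ^+ 4 + C / D)).
by field.
Qed.

Lemma inv_coef_lambda :
  inv_coef m 0 * D + inv_coef m k + inv_coef m k.+1 * C ^+ (2 ^ k.+1) = lambda m.
Proof.
rewrite !inv_coefE /lambda /=.
have -> : (m - 1 - 0 = k.+1)%N by lia.
have -> : (m - 1 - k = 1)%N by lia.
have -> : (m - 1 - k.+1 = 0)%N by lia.
rewrite hDq (SprevSS k.+1) Sprev0 Sprev1 expr0n expn_eq0 /= expr1n expn1.
set h := D ^+ (2 ^ k.+1).
have hh : h ^+ 2 = D by rewrite /h -expr2S.
have -> : D / h = h by rewrite -{1}hh expr2 mulfK // expf_neq0.
by apply: (eq_pchar2 F2 (z := 1)); field.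
Qed.

Lemma lambda_idem : lambda m ^+ 2 = lambda m.
Proof.
rewrite /lambda /= sqrrD_pchar2 // [(D * _) ^+ 2]exprMn.
rewrite (frob_SprevSS 1 k.+1) (SprevSS_frob k.+1) !addn1 hCq hDq expn1 -exprM.
by ring.
Qed.

Lemma inv_coef_Mlin w : w ^+ (2 ^ m) = w ->
  \sum_(i < m) inv_coef m i * Mlin w ^+ (2 ^ i) = lambda m * w.
Proof.
move=> wq; under eq_bigr do rewrite frob_Mlin.
pose W i := w ^+ (2 ^ i).
rewrite (@sum_rec3 F (fun i => C ^+ (2 ^ i)) (fun i => D ^+ (2 ^ i)) (inv_coef m) W k)
  => [|j hj]; last exact: inv_coef_rec.
have W0 : W 0%N = w by rewrite /W expr1.
have Wm1 : W m.+1 = w ^+ 2 by rewrite /W expr2S wq.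
rewrite W0 Wm1 -/(W m) /W wq !expn0 !expn1 !expr1 -inv_coef_lambda.
have := inv_coef_wrap; set z := _ + inv_coef m k.+1 => hz.
by rewrite -[RHS]addr0 -(mul0r (w ^+ 2)) -hz /z; ring.
Qed.

Lemma Xsol_frobfix a0 a1 n :
  a0 \in frobfix m -> a1 \in frobfix m -> Xsol a0 a1 n \in frobfix m.
Proof.
move=> fa0 fa1; have fC : C \in frobfix m by apply/frobfixP.
have fD : D \in frobfix m by apply/frobfixP.
elim: n {-2}n (leqnn n) => [|n IH] [|[|i]] // hi; rewrite ?Xsol0 ?Xsol1 //.
by rewrite XsolSS frobfixD ?rpredM ?rpredX ?IH // ltnW.
Qed.

Lemma Sprev_frobfix n : s n \in frobfix m.
Proof.
have -> : s n = Xsol 0 1 n by rewrite /Xsol; ring.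
by rewrite Xsol_frobfix ?rpred1 ?frobfix0.
Qed.

Lemma Tsol_frobfix n : Tsol n \in frobfix m.
Proof.
have -> : Tsol n = Xsol 1 0 n by rewrite /Xsol; ring.
by rewrite Xsol_frobfix ?rpred1 ?frobfix0.
Qed.

(* The monodromy has determinant 1, so with trace 0 it has the eigenvalue 1. *)
Lemma monodromy_fixed_vector : lambda m = 0 ->
  exists a0 a1, [/\ a0 \in frobfix m, a1 \in frobfix m, (a0, a1) != (0, 0),
                    Xsol a0 a1 m = a0 & Xsol a0 a1 m.+1 = a1].
Proof.
rewrite /lambda => /eqP; rewrite addr_eq0 oppr_pchar2 // => /eqP Ts.
have det1 : Tsol m * s m.+1 + s m * Tsol m.+1 = 1.
  by apply: (mulIf hD); rewrite casoratian hDq mul1r.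
have det0 : (Tsol m + 1) * (s m.+1 + 1) = s m * Tsol m.+1.
  have -> : s m * Tsol m.+1 = 1 - s m.+1 ^+ 2 by rewrite -det1 Ts; ring.
  by rewrite Ts; apply: (eq_pchar2 F2 (z := s m.+1 ^+ 2 + s m.+1)); ring.
have [x [y [fx fy xy0 hx hy]]] := singular2_kernel F2
  (frobfixD F2 (Tsol_frobfix m) (rpred1 _)) (Sprev_frobfix m)
  (Tsol_frobfix m.+1) (frobfixD F2 (Sprev_frobfix m.+1) (rpred1 _)) det0.
exists x, y; split=> //; apply/eqP; rewrite -subr_eq0 oppr_pchar2 //; apply/eqP.
- by rewrite -[RHS]hx /Xsol; ring.
- by rewrite -[RHS]hy /Xsol; ring.
Qed.

Section PeriodicSolution.
Variables a0 a1 : F.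
Hypotheses (fa0 : a0 \in frobfix m) (fa1 : a1 \in frobfix m).
Hypotheses (per0 : Xsol a0 a1 m = a0) (per1 : Xsol a0 a1 m.+1 = a1).
Local Notation Y := (Xsol a0 a1).

Lemma Xsol_periodic n : Y (n + m) = Y n.
Proof.
apply: (@rec2_ext F (fun n => C ^+ (2 ^ n)) (fun n => D ^+ (2 ^ n)) (fun n => Y (n + m)))
  => {n} [n|n||] /=.
- by rewrite !addSn XsolSS !frobfix_period.
- exact: XsolSS.
- by rewrite per0 Xsol0.
- by rewrite per1 Xsol1.
Qed.

(* Frobenius shifts Xtrace r to Xtrace r.+1, so Mlin (Xtrace 0) is a sum of
   Frobenius images of instances of the recurrence. *)
Definition Xtrace r := \sum_(j < m) Y (m + r - j) ^+ (2 ^ j).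

Lemma Xtrace_sqr r : Xtrace r ^+ 2 = Xtrace r.+1.
Proof.
rewrite /Xtrace (frob_sum F2 1) big_ord_recr [in RHS]big_ord_recl /= addrC.
congr (_ + _).
  rewrite expr2nD addn1.
  have /frobfixP -> := Xsol_frobfix (m + r - k.+1) fa0 fa1.
  by rewrite -Xsol_periodic expr1; congr (Y _); lia.
by apply: eq_bigr => j _; rewrite expr2nD addn1 /bump /=; congr (Y _ ^+ _); lia.
Qed.

Lemma Xtrace_frob n : Xtrace 0 ^+ (2 ^ n) = Xtrace n.
Proof. by elim: n => [|n IH]; rewrite ?expr1 // expr2S IH Xtrace_sqr. Qed.

Lemma Xtrace_frobfix : Xtrace 0 \in frobfix m.
Proof.
apply/frobfixP; rewrite Xtrace_frob; apply: eq_bigr => j _.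
by rewrite addn0 -[in RHS]Xsol_periodic; congr (Y _ ^+ _); have := ltn_ord j; lia.
Qed.

Lemma Mlin_Xtrace : Mlin (Xtrace 0) = 0.
Proof.
rewrite /Mlin (Xtrace_frob 2) -/(Xtrace 0 ^+ 2) Xtrace_sqr /Xtrace.
rewrite !big_distrr -!big_split /=; apply: big1 => j _.
have hj := ltn_ord j.
have -> : (m + 2 - j = (m - j).+2)%N by lia.
have -> : (m + 1 - j = (m - j).+1)%N by lia.
rewrite addn0 XsolSS frobD // [(C ^+ _ * _) ^+ _]exprMn [(D ^+ _ * _) ^+ _]exprMn.
by rewrite !expr2nD subnK ?(ltnW hj) // hCq hDq -addrA addrr_pchar2.
Qed.

End PeriodicSolution.
End Monodromy.
End Recurrence.

Lemma exists_nonroot (F : finFieldType) (p : {poly F}) :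
  p != 0 -> (size p <= #|F|)%N -> exists x, ~~ root p x.
Proof.
move=> p0 hsz; apply/existsP; rewrite -negb_forall; apply/negP => /forallP allroot.
suff: (size (enum F) < size p)%N by rewrite -cardE ltnNge hsz.
by apply: max_poly_roots p0 _ (enum_uniq F); apply/allP => x _; apply: allroot.
Qed.

Lemma coef_sum_trace_poly (R : nzRingType) m (al : nat -> R) i : (i < m)%N ->
  (\sum_(j < m) al j *: ('X^(2 ^ j) + 'X^(2 ^ (m + j))) : {poly R})`_(2 ^ i) = al i.
Proof.
move=> im; rewrite coef_sum (bigD1 (Ordinal im)) //= big1 => [|j ji].
  rewrite coefZ coefD !coefXn !eqn_exp2l // eqxx (_ : (i == m + i) = false).
    by rewrite mulr1n mulr0n !addr0 mulr1.
  by apply/eqP; lia.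
rewrite coefZ coefD !coefXn !eqn_exp2l // (_ : (i == m + j) = false); last by apply/eqP; lia.
by move: ji; rewrite -val_eqE /= eq_sym => /negbTE ->; rewrite addr0 mulr0.
Qed.

Section FiniteField.
Variable F : finFieldType.
Hypothesis F2 : 2%N \in [pchar F].
Variable k : nat.
Local Notation m := k.+2.
Hypothesis cardF : #|F| = ((2 ^ m) ^ 2)%N.

Lemma frobK (x : F) : (x ^+ (2 ^ m)) ^+ (2 ^ m) = x.
Proof. by rewrite -exprM mulnn -cardF expf_card. Qed.

Lemma frobfix_trace (x : F) : x ^+ (2 ^ m) + x \in frobfix m.
Proof. by apply/frobfixP; rewrite frobD // frobK addrC. Qed.

Variables C D : F.

(* Evaluating at x scales (a0, a1) by the trace c = x^q + x; ranging over all
   of F avoids having to count the elements of F_q. *)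
Lemma exists_Xtrace_neq0 a0 a1 : (a0, a1) != (0, 0) -> Xsol C D a0 a1 m = a0 ->
  exists2 c, c \in frobfix m & Xtrace C D k (c * a0) (c * a1) 0 != 0.
Proof.
move=> a01 per0; pose al j := Xsol C D a0 a1 (m - j) ^+ (2 ^ j).
pose p : {poly F} := \sum_(j < m) al j *: ('X^(2 ^ j) + 'X^(2 ^ (m + j))).
have pE x : p.[x] = Xtrace C D k ((x ^+ (2 ^ m) + x) * a0) ((x ^+ (2 ^ m) + x) * a1) 0.
  rewrite horner_sum; apply: eq_bigr => j _.
  rewrite hornerZ hornerD !hornerXn addn0 XsolZ exprMn frobD // expr2nD.
  by rewrite mulrC addrC.
have p0 : p != 0.
  move: a01; rewrite xpair_eqE negb_and => /orP[] a_nz; apply: contraNneq a_nz => p0.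
    have := coef_sum_trace_poly al (ltn0Sn k.+1).
    by rewrite -/p p0 coef0 /al subn0 expr1 per0 => <-.
  have := coef_sum_trace_poly al (ltnSn k.+1); rewrite -/p p0 coef0 /al subSnn Xsol1.
  by move/esym/eqP; rewrite expf_eq0 => /andP[_ ->].
have psz : (size p <= #|F|)%N.
  rewrite cardF -expnM mulnC; apply: (leq_trans (size_sum _ _ _)); apply/bigmax_leqP => j _.
  apply: (leq_trans (size_scale_leq _ _)); apply: (leq_trans (size_polyD _ _)).
  by rewrite !size_polyXn geq_max !ltn_exp2l //; have := ltn_ord j; lia.
have [x xn] := exists_nonroot p0 psz.
by exists (x ^+ (2 ^ m) + x); rewrite ?frobfix_trace // -pE.
Qed.

Hypotheses (hD : D != 0) (hCq : C ^+ (2 ^ m) = C) (hDq : D ^+ (2 ^ m) = D).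

Lemma Mlin_kernel : lambda C D m = 0 ->
  exists2 w, w \in frobfix m & w != 0 /\ Mlin C D w = 0.
Proof.
move=> /(monodromy_fixed_vector F2 hD hCq hDq) [a0 [a1 [fa0 fa1 a01 per0 per1]]].
have [c fc w0] := exists_Xtrace_neq0 a01 per0.
have [fca0 fca1] : c * a0 \in frobfix m /\ c * a1 \in frobfix m by rewrite !rpredM.
have [per0' per1'] : Xsol C D (c * a0) (c * a1) m = c * a0
                     /\ Xsol C D (c * a0) (c * a1) m.+1 = c * a1 by rewrite !XsolZ per0 per1.
exists (Xtrace C D k (c * a0) (c * a1) 0); first exact: Xtrace_frobfix.
by split=> //; apply: Mlin_Xtrace.
Qed.

End FiniteField.

Section PermutationInverse.
Variable L : finFieldType.
Hypothesis L2 : 2%N \in [pchar L].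
Variable k : nat.
Local Notation m := k.+2.
Local Notation q := (2 ^ m)%N.
Hypothesis cardL : #|L| = (q ^ 2)%N.
Variables b delta : L.
Hypotheses (hb : b != 0) (hbq : b ^+ q = b) (hdelta : delta ^+ q != delta).

Local Notation Tr x := (x ^+ q + x).
Local Notation e := (1 + (q ^ 2 + q) %/ 4)%N.
Local Notation t := (delta ^+ q + delta).
Local Notation C := (b ^+ 4 * t ^+ 4).
Local Notation D := (b ^+ 4 * t ^+ 5).
Local Notation B := (b ^+ 4 * t ^+ 4 * delta ^+ (q + 1)).
Local Notation P x := (b * (x ^+ q + x + delta) ^+ e + x).

(* (q^2 + q)/4 = (q + 1) 2^(m-2): the power n is a power of the norm z^(q+1). *)
Lemma quarter_norm (z : L) : let n := z ^+ ((q ^ 2 + q) %/ 4) in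
  [/\ n ^+ q = n, n ^+ 4 = z ^+ q * z & z ^+ e = z * n].
Proof.
have q4 : (q = 2 ^ k * 4)%N by rewrite !expnS mulnA mulnC.
have -> : ((q ^ 2 + q) %/ 4 = (q + 1) * 2 ^ k)%N.
  rewrite q4; set x := (2 ^ k)%N.
  by rewrite (_ : ((x * 4) ^ 2 + x * 4 = (x * 4 + 1) * x * 4)%N) ?mulnK //; nia.
rewrite exprM addn1 exprSr /=; set N := z ^+ q * z.
have Nq : N ^+ q = N by rewrite exprMn frobK // mulrC.
split.
- by rewrite -exprM mulnC exprM Nq.
- by rewrite -exprM -q4.
- by rewrite exprD expr1 exprM exprSr.
Qed.

Lemma trace_shift y w : w \in frobfix m ->
  Tr (y + b * (w + delta) ^+ e) = Tr y + b * (w + delta) ^+ ((q ^ 2 + q) %/ 4) * t.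
Proof.
move=> /frobfixP wq; have [nq _ ->] := quarter_norm (w + delta).
set n := _ ^+ ((q ^ 2 + q) %/ 4) in nq *.
rewrite frobD // exprMn hbq exprMn nq frobD // wq.
by apply: (eq_pchar2 L2 (z := b * n * w)); ring.
Qed.

Lemma shift_pow4 w : w \in frobfix m ->
  (b * (w + delta) ^+ ((q ^ 2 + q) %/ 4) * t) ^+ 4 = C * (w ^+ 2 + t * w) + B.
Proof.
move=> /frobfixP wq; have [_ n4 _] := quarter_norm (w + delta).
by rewrite !exprMn n4 frobD // wq addn1 [delta ^+ q.+1]exprSr; ring.
Qed.

Lemma Mlin_trace_P x : Tr (P x) ^+ 4 + B = Mlin C D (Tr x).
Proof.
have fw := frobfix_trace L2 cardL x.
rewrite (addrC _ x) trace_shift // exp4D_pchar2 // shift_pow4 //.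
by rewrite /Mlin; apply: (eq_pchar2 L2 (z := B)); ring.
Qed.

Lemma P_lift y w : w \in frobfix m -> Mlin C D w = Tr y ^+ 4 + B ->
  Tr (y + b * (w + delta) ^+ e) = w /\ P (y + b * (w + delta) ^+ e) = y.
Proof.
move=> fw hM; set x := y + _.
have Trx : Tr x = w.
  apply/eqP; suff: (Tr x - w) ^+ 4 == 0 by rewrite expf_eq0 subr_eq0.
  rewrite oppr_pchar2 // /x trace_shift // (exp4D_pchar2 L2 (_ + _)).
  rewrite (exp4D_pchar2 L2 (Tr y)) shift_pow4 //.
  have -> : Tr y ^+ 4 = Mlin C D w - B by rewrite hM addrK.
  rewrite /Mlin; apply/eqP.
  by apply: (eq_pchar2 L2 (z := w ^+ 4 + C * w ^+ 2 + C * t * w)); ring.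
by split=> //; rewrite Trx /x addrCA addrr_pchar2 // addr0.
Qed.

Lemma t_frobq : t ^+ q = t.
Proof. by rewrite frobD // frobK // addrC. Qed.

Lemma D_neq0 : D != 0.
Proof. by rewrite mulf_neq0 ?expf_neq0 // addr_eq0 oppr_pchar2. Qed.

Lemma C_frobq : C ^+ q = C.
Proof. by rewrite exprMn exprAC [(t ^+ 4) ^+ q]exprAC hbq t_frobq. Qed.

Lemma D_frobq : D ^+ q = D.
Proof. by rewrite exprMn exprAC [(t ^+ 5) ^+ q]exprAC hbq t_frobq. Qed.

Lemma lambda_eq1 : injective (fun x => P x) -> lambda C D m = 1.
Proof.
move=> Pinj.
have : lambda C D m * (lambda C D m - 1) = 0.
  by rewrite mulrBr -expr2 lambda_idem ?C_frobq ?D_frobq // mulr1 subrr.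
move/eqP; rewrite mulf_eq0 subr_eq0 => /orP[/eqP lam0|/eqP //].
have [w fw [w0 Mw]] := Mlin_kernel L2 cardL D_neq0 C_frobq D_frobq lam0.
have Tr0 : Tr (0 : L) = 0 by rewrite expr0n expn_eq0 /= mulr0n addr0.
have hM : Mlin C D w = Tr (P 0) ^+ 4 + B by rewrite Mlin_trace_P Tr0 Mw /Mlin; ring.
have [Trx Px] := P_lift fw hM.
have x0 : P 0 + b * (w + delta) ^+ e = 0 by apply: Pinj; rewrite /= Px.
by move: w0; rewrite -Trx x0 Tr0 eqxx.
Qed.

Lemma Pinv_P x : injective (fun x => P x) ->
  P x + b * (delta + \sum_(i < m) inv_coef C D m i * (Tr (P x) ^+ 4 + B) ^+ (2 ^ i)) ^+ e
  = x.
Proof.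
move=> Pinj; rewrite Mlin_trace_P inv_coef_Mlin ?D_neq0 ?C_frobq ?D_frobq //.
  by rewrite lambda_eq1 // mul1r (addrC delta) addrAC addrr_pchar2 // add0r.
exact/frobfixP/frobfix_trace.
Qed.

End PermutationInverse.

Theorem theorem3p10 (L : finFieldType) (m : nat)
  (hchar : (2%N \in [pchar L])) (hm : (2 <= m)%N)
  (hcard : #|L| = ((2 ^ m) ^ 2)%N)
  (b delta : L)
  (hb : b != 0) (hbq : b ^+ (2 ^ m) = b)
  (hdelta : delta ^+ (2 ^ m) != delta) :
  let q := (2 ^ m)%N in
  let e := (1 + (q ^ 2 + q) %/ 4)%N in
  let B := b ^+ 4 * (delta ^+ q + delta) ^+ 4 * delta ^+ (q + 1) in
  let C := b ^+ 4 * (delta ^+ q + delta) ^+ 4 in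
  let D := b ^+ 4 * (delta ^+ q + delta) ^+ 5 in
  let P := fun x : L => b * (x ^+ q + x + delta) ^+ e + x in
  let Pinv := fun x : L =>
    x + b * (delta + \sum_(i < m)
               ((Sprev C D (m - 1 - i)) ^+ (2 ^ i.+1)
                 + D ^- (2 ^ i.+1 - 1) * Sseq C D i)
               * ((x ^+ q + x) ^+ 4 + B) ^+ (2 ^ i)) ^+ e in
  bijective P ->
  (forall c : L, P (Pinv c) = c) /\ (forall c : L, Pinv (P c) = c).
Proof.
case: m hm hcard hbq hdelta => [|[|k]] // _ hcard hbq hdelta.
move=> q e B C D P Pinv Pbij.
have PinvK : cancel P Pinv by move=> x; apply: Pinv_P => //; exact: bij_inj.
by split=> //; apply/(bij_can_sym Pbij).
Qed.
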